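(* For all positive integers $d$ and $p$, (i) $\displaystyle \left|B(d,p)\cap\mathbb{P}^d_\circ\right|=\frac{1}{2}\sum_{j=1}^{d}2^j\binom{d}{j}\sum_{i=j}^{p}c_\psi(i,j)$, and (ii) $\displaystyle \kappa\!\left(B(d,p)\cap\mathbb{P}^d_\circ\right)=\frac{1}{2d}\sum_{j=1}^{d}2^j\binom{d}{j}\sum_{i=j}^{p}i\,c_\psi(i,j)$, where $c_\psi(i,j)$ is the number of primitive points of $\mathbb{Z}^j$ with all coordinates positive and $1$-norm $i$.
   Context: A point of $\mathbb{Z}^d$ is primitive if its coordinates are relatively prime; $\mathbb{P}^d_\circ$ denotes the set of primitive points of $\mathbb{Z}^d$ whose first non-zero coordinate is positive. $B(d,p)=\{x\in\mathbb{R}^d:\|x\|_1\le p\}$. For a finite $\mathcal{X}\subset\mathbb{R}^d$, $\kappa(\mathcal{X})=\max_{1\le i\le d}\sum_{x\in\mathcal{X}}|x_i|$. *)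

From mathcomp Require Import all_boot all_order all_algebra.
Set Implicit Arguments. Unset Strict Implicit. Unset Printing Implicit Defensive.
Import Order.TTheory GRing.Theory Num.Theory.

Definition zvec (d : nat) := {ffun 'I_d -> int}.

Definition primitive d (x : zvec d) : bool :=
  \big[gcdn/0%N]_(k < d) `|x k|%N == 1%N.

Definition first_nonzero_pos d (x : zvec d) : bool :=
  [exists k : 'I_d, (0 < x k)%R && [forall l : 'I_d, (l < k)%N ==> (x l == 0%R)]].

Definition norm1 d (x : zvec d) : nat := \sum_(k < d) `|x k|%N.

Definition inB d p (x : zvec d) : bool := (norm1 x <= p)%N.

Definition inPo d (x : zvec d) : bool := primitive x && first_nonzero_pos x.

(* Encoding of the box [-p,p]^d (which contains B(d,p)) as a finite type. *)
Definition box_vec d p (f : {ffun 'I_d -> 'I_(2 * p).+1}) : zvec d :=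
  [ffun k => (Posz (f k) - Posz p)%R].

(* Duplicate-free enumeration of B(d,p) ∩ P^d_o. *)
Definition BP (d p : nat) : seq (zvec d) :=
  [seq box_vec f | f <- enum {ffun 'I_d -> 'I_(2 * p).+1}
                 & inB p (box_vec f) && inPo (box_vec f)].

Definition kappa d (X : seq (zvec d)) : nat :=
  \max_(i < d) \sum_(x <- X) `|x i|%N.

(* c_psi(i,j): number of primitive points of Z^j with all coordinates
   positive and 1-norm i (such points have coordinates in [1, i]). *)
Definition c_psi (i j : nat) : nat :=
  #|[set f : {ffun 'I_j -> 'I_i.+1} |
      [forall k, (0 < f k)%N] && (\sum_(k < j) (f k : nat) == i)
      && (\big[gcdn/0%N]_(k < j) (f k : nat) == 1%N)]|.

From mathcomp Require Import all_boot all_order all_algebra.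
From mathcomp Require Import fingroup perm zify.
Set Implicit Arguments. Unset Strict Implicit. Unset Printing Implicit Defensive.
Import Order.TTheory GRing.Theory Num.Theory.

(* Negation is an involution of the nonzero points exchanging those whose first
   nonzero coordinate is positive with the others, and it preserves the 1-norm and
   primitivity; so the number of points of B(d,p) ∩ P^d_o, and each of their
   coordinate sums, is half the corresponding quantity over all primitive points of
   B(d,p).  A point with exactly j nonzero coordinates is determined by their
   positions ('C(d,j) choices), their signs (2^j choices) and the sequence of their
   absolute values, which is primitive, positive and of 1-norm i <= p exactly when
   the point is primitive of 1-norm i; this gives (i).  Coordinate permutations
   preserve B(d,p) and primitivity, so all d coordinate sums coincide: d κ is the
   total 1-norm, computed in the same way with weight i, which gives (ii). *)

Fixpoint posseqs (m j : nat) : seq (seq nat) :=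
  if j is j'.+1 then [seq a :: s | a <- index_iota 1 m, s <- posseqs m j'] else [:: [::]].

Lemma big_posseqsS m j (F : seq nat -> nat) :
  \sum_(s <- posseqs m j.+1) F s = \sum_(1 <= a < m) \sum_(s <- posseqs m j) F (a :: s).
Proof. exact: big_allpairs_dep. Qed.

Lemma sum_posseqs_widen m m' j (F : seq nat -> nat) : 0 < m <= m' ->
  (forall s, has (leq m) s -> F s = 0) ->
  \sum_(s <- posseqs m' j) F s = \sum_(s <- posseqs m j) F s.
Proof.
case/andP=> m_gt0 le_mm'; elim: j F => [//|j IHj] F F0.
rewrite !big_posseqsS (big_cat_nat m_gt0 le_mm') /= [X in _ + X]big1_seq ?addn0.
  by apply: eq_bigr => a _; apply: IHj => s s_big; rewrite F0 //= s_big orbT.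
move=> a /andP[_]; rewrite mem_index_iota => /andP[le_ma _]; rewrite big1 // => s _.
by rewrite F0 //= le_ma.
Qed.

Definition ffcons (T : Type) n (a : T) (g : {ffun 'I_n -> T}) : {ffun 'I_n.+1 -> T} :=
  [ffun k => if unlift ord0 k is Some k' then g k' else a].

Lemma ffcons0 (T : Type) n (a : T) (g : {ffun 'I_n -> T}) : ffcons a g ord0 = a.
Proof. by rewrite ffunE unlift_none. Qed.

Lemma ffcons_lift (T : Type) n (a : T) (g : {ffun 'I_n -> T}) k :
  ffcons a g (lift ord0 k) = g k.
Proof. by rewrite ffunE liftK. Qed.

Lemma map_ffcons (T U : Type) n (h : T -> U) (a : T) (g : {ffun 'I_n -> T}) :
  [seq h (ffcons a g k) | k <- enum 'I_n.+1] = h a :: [seq h (g k) | k <- enum 'I_n].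
Proof.
rewrite enum_ordSl /= ffcons0 -map_comp.
by congr cons; apply: eq_map => k /=; rewrite ffcons_lift.
Qed.

Lemma sum_ffunS (T : finType) n (F : {ffun 'I_n.+1 -> T} -> nat) :
  \sum_f F f = \sum_(a : T) \sum_(g : {ffun 'I_n -> T}) F (ffcons a g).
Proof.
rewrite pair_big (reindex (fun u : T * {ffun 'I_n -> T} => ffcons u.1 u.2)) //=.
exists (fun f => (f ord0, [ffun k => f (lift ord0 k)])) => [[a g] _ | f _] /=.
  by rewrite ffcons0; congr pair; apply/ffunP => k; rewrite ffunE ffcons_lift.
by apply/ffunP => k; rewrite ffunE; case: unliftP => [k'|] ->; rewrite ?ffunE.
Qed.

Lemma forall_ffcons (T : finType) n (P : pred T) (a : T) (g : {ffun 'I_n -> T}) :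
  [forall k, P (ffcons a g k)] = P a && [forall k, P (g k)].
Proof.
apply/forallP/andP => [Pag | [Pa /forallP Pg] k].
  by split; [rewrite -(ffcons0 a g) | apply/forallP => k; rewrite -(ffcons_lift a g k)].
by case: (unliftP ord0 k) => [k'|] ->; rewrite ?ffcons_lift ?ffcons0.
Qed.

Lemma sum_pos_ffun_posseqs m j (F : seq nat -> nat) :
  \sum_(f : {ffun 'I_j -> 'I_m} | [forall k, 0 < f k]) F [seq (f k : nat) | k <- enum 'I_j]
  = \sum_(s <- posseqs m j) F s.
Proof.
elim: j F => [|j IHj] F.
  rewrite big_seq1 (eq_bigl (fun _ => true)) => [|f]; last by apply/forallP => -[].
  under eq_bigr do rewrite enum_ord0 /=.
  by rewrite sum_nat_const card_ffun !card_ord expn0 mul1n.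
rewrite big_posseqsS big_mkcond sum_ffunS.
under eq_bigr => a _ do under eq_bigr => g _ do
  rewrite (forall_ffcons (fun x : 'I_m => 0 < x)) (map_ffcons (@nat_of_ord m)).
rewrite -(big_mkord xpredT (fun a => \sum_(g : {ffun 'I_j -> 'I_m})
  if (0 < a) && [forall k, 0 < g k] then F (a :: [seq (g k : nat) | k <- enum 'I_j]) else 0)).
case: m {IHj}(IHj) => [|m] IHj; first by rewrite !big_geq.
rewrite big_ltn // big1 ?add0n //.
by apply: eq_big_nat => a /andP[a_gt0 _]; rewrite -IHj a_gt0 [RHS]big_mkcond.
Qed.

Lemma sum_distn_center p (G : nat -> nat) :
  \sum_(c < (2 * p).+1) G `|c - p| = G 0 + 2 * \sum_(1 <= a < p.+1) G a.
Proof.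
have lower : \sum_(0 <= c < p) G `|c - p| = \sum_(1 <= a < p.+1) G a.
  rewrite big_nat_rev big_add1 /=.
  by apply: eq_big_nat => c /andP[_ ltcp]; congr G; lia.
have upper : \sum_(p.+1 <= c < (2 * p).+1) G `|c - p| = \sum_(1 <= a < p.+1) G a.
  rewrite (big_addn 1 _ p) (_ : (2 * p).+1 - p = p.+1); last by lia.
  by apply: eq_bigr => a _; congr G; lia.
rewrite -(big_mkord xpredT (fun c => G `|c - p|)) (@big_cat_nat _ _ _ p) //=; last by lia.
by rewrite [X in _ + X]big_ltn ?distnn ?lower ?upper; lia.
Qed.

Lemma sum_binomialS d (u : nat -> nat) :
  \sum_(0 <= j < d.+2) 'C(d.+1, j) * u j
  = \sum_(0 <= j < d.+1) 'C(d, j) * u j + \sum_(0 <= j < d.+1) 'C(d, j) * u j.+1.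
Proof.
rewrite [LHS]big_nat_recl // [in RHS]big_nat_recl // !bin0 -addnA; congr (_ + _).
under eq_bigr do rewrite binS mulnDl.
rewrite big_split /=; congr (_ + _).
by rewrite [LHS]big_nat_recr //= bin_small // mul0n addn0.
Qed.

(* The nonzero coordinates of a point are read off in order: for each length j
   there are 'C(d, j) choices of their positions and 2 ^ j of their signs. *)
Lemma sum_box_support d p (F : seq nat -> nat) :
  \sum_(f : {ffun 'I_d -> 'I_(2 * p).+1})
     F [seq a <- [seq `|f k - p| | k <- enum 'I_d] | a != 0]
  = \sum_(0 <= j < d.+1) 'C(d, j) * (2 ^ j * \sum_(s <- posseqs p.+1 j) F s).
Proof.
elim: d F => [|d IHd] F.
  by rewrite enum_ord0 /= sum_nat_const card_ffun !card_ord big_nat1 big_seq1 bin0 !expn0 !mul1n.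
pose Fc a s := F (if a != 0 then a :: s else s).
have split_head c (g : {ffun 'I_d -> 'I_(2 * p).+1}) :
    F [seq a <- [seq `|ffcons c g k - p| | k <- enum 'I_d.+1] | a != 0]
    = Fc `|c - p| [seq a <- [seq `|g k - p| | k <- enum 'I_d] | a != 0].
  by rewrite (map_ffcons (fun x : 'I_(2 * p).+1 => `|x - p|)).
rewrite sum_ffunS; under eq_bigr do under eq_bigr do rewrite split_head.
under eq_bigr do rewrite IHd.
rewrite (sum_distn_center p (fun a =>
  \sum_(0 <= j < d.+1) 'C(d, j) * (2 ^ j * \sum_(s <- posseqs p.+1 j) Fc a s))).
rewrite sum_binomialS; congr (_ + _).
rewrite exchange_big big_distrr; apply: eq_bigr => j _.
rewrite big_posseqsS -!big_distrr /= mulnCA expnS -[in RHS]mulnA.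
congr (_ * (_ * (_ * _))).
by apply: eq_big_nat => a /andP[a_gt0 _]; rewrite /Fc -lt0n a_gt0.
Qed.

Lemma c_psi_small i j : i < j -> c_psi i j = 0.
Proof.
move=> lt_ij; apply/eqP; rewrite cards_eq0; apply/eqP/setP => f; rewrite !inE.
apply/negbTE; apply: contraTN lt_ij => /andP[/andP[/forallP f_gt0 /eqP sum_f] _].
rewrite -leqNgt -sum_f.
have : \sum_(k < j) 1 <= \sum_(k < j) f k by apply: leq_sum => k _; apply: f_gt0.
by rewrite sum1_card card_ord.
Qed.

Lemma leq_sum_has m (s : seq nat) : has (leq m) s -> m <= \sum_(a <- s) a.
Proof.
elim: s => [//|a s IHs] /= /orP[le_ma | /IHs le_ms]; rewrite big_cons; lia.
Qed.

Lemma c_psi_posseqs i j m : i < m ->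
  c_psi i j = count (fun s => (\sum_(a <- s) a == i) && (\big[gcdn/0]_(a <- s) a == 1))
                    (posseqs m j).
Proof.
move=> lt_im; rewrite -sum1_count big_mkcond /=.
rewrite (@sum_posseqs_widen i.+1) => [|//|s /leq_sum_has]; last by case: eqP => //; lia.
rewrite -sum_pos_ffun_posseqs /c_psi -sum1_card [RHS]big_mkcond [LHS]big_mkcond /=.
apply: eq_bigr => f _; rewrite inE big_map big_enum big_map big_enum.
by case: [forall k, _].
Qed.

Lemma sum_c_psi_from j n (u : nat -> nat) :
  \sum_(0 <= i < n) u i * c_psi i j = \sum_(j <= i < n) u i * c_psi i j.
Proof.
case: (leqP j n) => [le_jn | lt_nj].
  rewrite (big_cat_nat _ le_jn) //= big1_seq ?add0n // => i /andP[_].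
  by rewrite mem_index_iota => /andP[_ lt_ij]; rewrite c_psi_small ?muln0.
rewrite [RHS]big_geq ?big1_seq ?(ltnW lt_nj) // => i /andP[_].
by rewrite mem_index_iota => /andP[_ lt_in]; rewrite c_psi_small ?muln0 // (ltn_trans lt_in).
Qed.

Lemma sum_posseqs_primitive p j (c : nat -> nat) :
  \sum_(s <- posseqs p.+1 j | (\sum_(a <- s) a <= p) && (\big[gcdn/0]_(a <- s) a == 1))
     c (\sum_(a <- s) a)
  = \sum_(j <= i < p.+1) c i * c_psi i j.
Proof.
rewrite -sum_c_psi_from.
under eq_big_nat => i /andP[_ lt_ip] do
  rewrite (c_psi_posseqs _ lt_ip) -sum1_count big_distrr.
rewrite (exchange_big_dep (fun s => \big[gcdn/0]_(a <- s) a == 1)) /= => [|i s _ /andP[]//].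
rewrite big_mkcondl; apply: eq_bigr => s gcd1.
rewrite [RHS](eq_bigl (fun i => i == \sum_(a <- s) a)) => [|i]; last first.
  by rewrite gcd1 andbT eq_sym.
by rewrite big_nat1_eq ltnS muln1.
Qed.

Lemma sum_involution_double (T : finType) (g : T -> T) (P Q : pred T) (w : T -> nat) :
    involutive g -> (forall x, P (g x) = P x) -> (forall x, P x -> Q (g x) = ~~ Q x) ->
    (forall x, w (g x) = w x) ->
  \sum_(x | P x) w x = 2 * \sum_(x | P x && Q x) w x.
Proof.
move=> gK Pg Qg wg; rewrite (bigID Q) /= mul2n -addnn; congr (_ + _).
rewrite (reindex g) /=; last by exists g => x _; rewrite gK.
apply: eq_big => [x | x _]; last exact: wg.
by rewrite Pg; case Px: (P x); rewrite //= Qg ?negbK.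
Qed.

Lemma sum_ffun_coord_sym (T : finType) n (P : pred {ffun 'I_n -> T}) (w : T -> nat)
    (i j : 'I_n) :
    (forall (s : 'S_n) (f : {ffun 'I_n -> T}), P [ffun k => f (s k)] = P f) ->
  \sum_(f | P f) w (f i) = \sum_(f | P f) w (f j).
Proof.
move=> Pperm; pose swap (f : {ffun 'I_n -> T}) := [ffun k => f (tperm i j k)].
rewrite (reindex swap) /=; last first.
  by exists swap => f _; apply/ffunP => k; rewrite !ffunE tpermK.
by apply: eq_big => [f | f _]; rewrite ?Pperm // ffunE tpermL.
Qed.

Section IntegerVectors.

Variable d : nat.
Local Open Scope ring_scope.
Implicit Types x : zvec d.

Lemma norm1N x : norm1 (- x) = norm1 x.
Proof. by apply: eq_bigr => k _; rewrite ffunE abszN. Qed.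

Lemma primitiveN x : primitive (- x) = primitive x.
Proof. by rewrite /primitive (eq_bigr (fun k => `|x k|%N)) // => k _; rewrite ffunE abszN. Qed.

Lemma primitive_neq0 x : primitive x -> x != 0.
Proof.
apply: contraTN => /eqP ->; rewrite /primitive big1 // => k _.
by rewrite ffunE.
Qed.

Lemma norm1_perm (s : 'S_d) x : norm1 [ffun k => x (s k)] = norm1 x.
Proof. by rewrite /norm1 [RHS](reindex_perm s); apply: eq_bigr => k _; rewrite ffunE. Qed.

Lemma primitive_perm (s : 'S_d) x : primitive [ffun k => x (s k)] = primitive x.
Proof.
rewrite /primitive [in RHS](reindex_perm s); congr (_ == _).
by apply: eq_bigr => k _; rewrite ffunE.
Qed.

Lemma first_nonzero_posE x (k0 : 'I_d) :
  x k0 != 0 -> (forall l : 'I_d, (l < k0)%N -> x l = 0) -> first_nonzero_pos x = (0 < x k0).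
Proof.
move=> xk0 x_lt; apply/existsP/idP => [[k /andP[xk_gt0 /forallP x_lt_k]] | xk0_gt0].
  case: (ltngtP k k0) => [lt_kk0 | lt_k0k | /val_inj <-] //.
    by rewrite x_lt in xk_gt0.
  by move: (x_lt_k k0); rewrite lt_k0k (negbTE xk0).
by exists k0; rewrite xk0_gt0; apply/forallP => l; apply/implyP => /x_lt ->.
Qed.

Lemma first_nonzero_posN x : x != 0 -> first_nonzero_pos (- x) = ~~ first_nonzero_pos x.
Proof.
move=> x_neq0; have /existsP[k1 xk1] : [exists k, x k != 0].
  apply: contraNT x_neq0 => /existsPn x0; apply/eqP/ffunP => k.
  by rewrite ffunE; apply/eqP/negPn.
case: (@arg_minnP _ k1 (fun k => x k != 0) val xk1) => k0 xk0 k0_min.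
have x_lt (k : 'I_d) : (k < k0)%N -> x k = 0.
  by move=> lt_kk0; apply/eqP; apply: contraTT lt_kk0 => /k0_min; rewrite -leqNgt.
rewrite (first_nonzero_posE xk0 x_lt) (@first_nonzero_posE _ k0) ?ffunE ?oppr_eq0 //.
  by rewrite oppr_gt0 ltNge le_eqVlt eq_sym (negbTE xk0).
by move=> k /x_lt xk_eq0; rewrite ffunE xk_eq0 oppr0.
Qed.

End IntegerVectors.

Section Box.

Variables d p : nat.
Local Notation box := {ffun 'I_d -> 'I_(2 * p).+1}.
Local Notation primitive_in_ball f := (inB p (box_vec f) && primitive (box_vec f)).

Definition box_opp (f : box) : box := [ffun k => rev_ord (f k)].

Lemma box_oppK : involutive box_opp.
Proof. by move=> f; apply/ffunP => k; rewrite !ffunE rev_ordK. Qed.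

Lemma box_vec_opp (f : box) : box_vec (box_opp f) = (- box_vec f)%R.
Proof. by apply/ffunP => k; rewrite !ffunE /=; have := ltn_ord (f k); lia. Qed.

Lemma box_vec_perm (s : 'S_d) (f : box) :
  box_vec [ffun k => f (s k)] = [ffun k => box_vec f (s k)].
Proof. by apply/ffunP => k; rewrite !ffunE. Qed.

Lemma sum_BP (F : zvec d -> nat) :
  \sum_(x <- BP d p) F x
  = \sum_(f : box | primitive_in_ball f && first_nonzero_pos (box_vec f)) F (box_vec f).
Proof.
rewrite /BP big_map big_filter big_enum_cond /=.
by apply: eq_bigl => f; rewrite /inPo andbA.
Qed.

Lemma double_sum_BP (w : zvec d -> nat) : (forall x, w (- x)%R = w x) ->
  2 * \sum_(x <- BP d p) w x = \sum_(f : box | primitive_in_ball f) w (box_vec f).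
Proof.
move=> wN; rewrite sum_BP.
rewrite [RHS](@sum_involution_double _ _ _ (fun f => first_nonzero_pos (box_vec f)) _ box_oppK)
  // => f.
- by rewrite /inB box_vec_opp norm1N primitiveN.
- by case/andP=> _ /primitive_neq0; rewrite box_vec_opp; apply: first_nonzero_posN.
- by rewrite box_vec_opp.
Qed.

Lemma sum_box_primitive (c : nat -> nat) :
  \sum_(f : box | primitive_in_ball f) c (norm1 (box_vec f))
  = \sum_(1 <= j < d.+1) 2 ^ j * 'C(d, j) * \sum_(j <= i < p.+1) c i * c_psi i j.
Proof.
pose F s := if (\sum_(a <- s) a <= p) && (\big[gcdn/0]_(a <- s) a == 1)
            then c (\sum_(a <- s) a) else 0.
pose nonzero_abs (f : box) := [seq a <- [seq `|f k - p| | k <- enum 'I_d] | a != 0].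
have big_nonzero_abs (op : Monoid.com_law 0) f :
    \big[op/0]_(a <- nonzero_abs f) a = \big[op/0]_(k < d) `|box_vec f k|%N.
  rewrite big_filter big_mkcond big_map big_enum; apply: eq_bigr => k _.
  by rewrite ffunE; case: eqP.
rewrite big_mkcond (eq_bigr (fun f => F (nonzero_abs f))) => [|f _]; last first.
  by rewrite /F /inB /primitive /norm1 !big_nonzero_abs.
rewrite sum_box_support big_ltn //= big_seq1 /F !big_nil /= !muln0 add0n.
apply: eq_big_nat => j _.
by rewrite -big_mkcond sum_posseqs_primitive mulnA (mulnC 'C(d, j)).
Qed.

Lemma kappa_BP : d * kappa (BP d p) = \sum_(x <- BP d p) norm1 x.
Proof.
pose K (i : 'I_d) := \sum_(x <- BP d p) `|x i|%N.
have double_K i : 2 * K i = \sum_(f : box | primitive_in_ball f) `|f i - p|.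
  rewrite double_sum_BP => [|x]; last by rewrite ffunE abszN.
  by apply: eq_bigr => f _; rewrite ffunE.
have K_const i j : K i = K j.
  apply/eqP; rewrite -(eqn_pmul2l (isT : 0 < 2)) !double_K; apply/eqP.
  apply: (@sum_ffun_coord_sym _ _ _ (fun c : 'I_(2 * p).+1 => `|c - p|)) => s f.
  by rewrite /inB box_vec_perm norm1_perm primitive_perm.
have kappaE i : kappa (BP d p) = K i.
  apply/eqP; rewrite eqn_leq (@leq_bigmax _ K i) andbT.
  by apply/bigmax_leqP => j _; rewrite -/(K j) (K_const j i).
rewrite /norm1 exchange_big (eq_bigr (fun => kappa (BP d p))) => [|k _]; last first.
  by rewrite (kappaE k).
by rewrite sum_nat_const card_ord.
Qed.

End Box.

Unset Implicit Arguments.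
Local Open Scope ring_scope.

Theorem proposition2p3 (d p : nat) (hd : (0 < d)%N) (hp : (0 < p)%N) :
  ((size (BP d p))%:R : rat)
    = 2^-1 * \sum_(1 <= j < d.+1)
               (2 ^ j * 'C(d, j) * \sum_(j <= i < p.+1) c_psi i j)%N%:R
  /\
  ((kappa (BP d p))%:R : rat)
    = (2 * d%:R)^-1 * \sum_(1 <= j < d.+1)
               (2 ^ j * 'C(d, j) * \sum_(j <= i < p.+1) i * c_psi i j)%N%:R.
Proof.
have size_BP : (2 * size (BP d p)
    = \sum_(1 <= j < d.+1) 2 ^ j * 'C(d, j) * \sum_(j <= i < p.+1) c_psi i j)%N.
  rewrite -sum1_size double_sum_BP // (sum_box_primitive _ _ (fun=> 1%N)).
  by under eq_bigr do under eq_bigr do rewrite mul1n.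
have kappa_BP2 : (2 * d * kappa (BP d p)
    = \sum_(1 <= j < d.+1) 2 ^ j * 'C(d, j) * \sum_(j <= i < p.+1) i * c_psi i j)%N.
  by rewrite -mulnA kappa_BP double_sum_BP ?(sum_box_primitive _ _ id) // => x; rewrite norm1N.
rewrite -!natr_sum -size_BP -kappa_BP2 !natrM; split; rewrite mulrA mulVf ?mul1r //.
by rewrite mulf_neq0 // pnatr_eq0 -lt0n.
Qed.
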